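(* Let $f:\mathbb{R}\to(0,\infty)$ be $C^4$, unimodal with maximum at $\mu$, of the form $f=e^{-H}$ with $H$ regularly varying (there is $\alpha>0$ with $H(tx)/H(t)\to x^\alpha$ as $|t|\to\infty$ for all $x>0$), and with $|(\log f)''''|<M$ for some $M>0$. Then for $\beta>0$, $$M'(\beta)=\mathrm{Var}_\beta(h(X)),\qquad S(\beta)=-\frac1\beta,\qquad S'(\beta)=\frac1{\beta^2}.$$
   Context: $h=\log f$, $k(x)=(x-\mu)h'(x)$; $\mathbb{E}_\beta,\mathrm{Var}_\beta$ denote moments under the density $f^\beta(x)/Z_\beta$ with $Z_\beta=\int f^\beta(z)\,dz$; $M(\beta)=\mathbb{E}_\beta[h(X)]$ and $S(\beta)=\mathbb{E}_\beta[k(X)]$. *)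

From Stdlib Require Import Reals.
From Coquelicot Require Import Coquelicot.
Open Scope R_scope.

Definition Int_R (g : R -> R) : R :=
  RInt_gen g (Rbar_locally m_infty) (Rbar_locally p_infty).
Definition ex_Int_R (g : R -> R) : Prop :=
  ex_RInt_gen g (Rbar_locally m_infty) (Rbar_locally p_infty).

Definition hlog (f : R -> R) (x : R) : R := ln (f x).
Definition Hpot (f : R -> R) (x : R) : R := - ln (f x).
Definition kfun (f : R -> R) (mu : R) (x : R) : R := (x - mu) * Derive (hlog f) x.

Definition fpow (f : R -> R) (beta : R) (x : R) : R := Rpower (f x) beta.
Definition Zb (f : R -> R) (beta : R) : R := Int_R (fpow f beta).

Definition Eb (f : R -> R) (beta : R) (g : R -> R) : R :=
  Int_R (fun x => g x * fpow f beta x) / Zb f beta.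
Definition Varb (f : R -> R) (beta : R) (g : R -> R) : R :=
  Eb f beta (fun x => (g x - Eb f beta g) ^ 2).

Definition Mfun (f : R -> R) (beta : R) : R := Eb f beta (hlog f).
Definition Sfun (f : R -> R) (mu : R) (beta : R) : R := Eb f beta (kfun f mu).

Definition C4 (f : R -> R) : Prop :=
  (forall n x, (n <= 4)%nat -> ex_derive_n f n x) /\
  (forall x, continuous (Derive_n f 4) x).

Definition unimodal_at (f : R -> R) (mu : R) : Prop :=
  (forall x y, x <= y <= mu -> f x <= f y) /\
  (forall x y, mu <= x <= y -> f y <= f x).

Definition regularly_varying (H : R -> R) (alpha : R) : Prop :=
  forall x, 0 < x ->
    is_lim (fun t => H (t * x) / H t) p_infty (Rpower x alpha) /\
    is_lim (fun t => H (t * x) / H t) m_infty (Rpower x alpha).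

From Stdlib Require Import Reals Lra Lia Classical FunctionalExtensionality.
From Coquelicot Require Import Coquelicot.
Open Scope R_scope.

(* Regular variation of [H = - log f] with positive index gives [H (2 t) >= c H t] for some
   [c > 1] and all large [|t|], so [H] outgrows [log |t|] and every power [f^eps] decays
   faster than [1 / (1 + x^2)]. Since moreover [h = log f <= h mu], the weight
   [(1 + |h|)^3 f^b] is integrable for every [b > 0]; this domination justifies
   differentiating [b |-> \int u f^b] under the integral sign, and the quotient rule then
   gives [M' = Var_b h]. Integrating [((x - mu) f^b)' = f^b + b k f^b] over the line, where
   [(x - mu) f^b] vanishes at both ends, gives [\int k f^b = - Z_b / b], i.e. [S b = - 1 / b]. *)

Lemma exp_le_compat x y : x <= y -> exp x <= exp y.
Proof. intros [H|H]; [left; apply exp_increasing | subst]; lra. Qed.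

Lemma Rabs_le_of_between c s : Rmin 0 s <= c <= Rmax 0 s -> Rabs c <= Rabs s.
Proof.
  unfold Rmin, Rmax; destruct (Rle_dec 0 s); intros; unfold Rabs; repeat destruct Rcase_abs; lra.
Qed.

Lemma exp_sub_1_abs_le s : Rabs (exp s - 1) <= Rabs s * exp (Rabs s).
Proof.
  destruct (MVT_abs exp exp 0 s) as [c [Hc Hcs]].
  { intros c _. apply derivable_pt_lim_exp. }
  rewrite exp_0, Rminus_0_r, (Rabs_pos_eq (exp c)) in Hc by (left; apply exp_pos).
  rewrite Hc, Rmult_comm. apply Rmult_le_compat_l; [apply Rabs_pos|].
  apply exp_le_compat. pose proof (Rabs_le_of_between c s Hcs). pose proof (Rle_abs c). lra.
Qed.

Lemma exp_sub_1_sub_abs_le y : Rabs (exp y - 1 - y) <= y ^ 2 * exp (Rabs y).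
Proof.
  destruct (MVT_abs (fun t => exp t - 1 - t) (fun t => exp t - 1) 0 y) as [c [Hc Hcy]].
  { intros c _. apply is_derive_Reals. auto_derive; auto; ring. }
  rewrite exp_0 in Hc. replace (exp y - 1 - y - (1 - 1 - 0)) with (exp y - 1 - y) in Hc by ring.
  rewrite Hc, Rminus_0_r, <- pow2_abs.
  pose proof (Rabs_le_of_between c y Hcy) as Hcy'.
  apply Rle_trans with (Rabs c * exp (Rabs c) * Rabs y).
  { apply Rmult_le_compat_r; [apply Rabs_pos | apply exp_sub_1_abs_le]. }
  assert (Hce : Rabs c * exp (Rabs c) <= Rabs y * exp (Rabs y)).
  { apply Rmult_le_compat; auto using Rabs_pos.
    - left; apply exp_pos.
    - apply exp_le_compat; lra. }
  apply (Rmult_le_compat_r (Rabs y)) in Hce; [simpl; lra | apply Rabs_pos].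
Qed.

Lemma one_add_cube_le_exp e : 0 < e ->
  exists K, 0 < K /\ forall a, 0 <= a -> (1 + a) ^ 3 <= K * exp (e * a).
Proof.
  intros He. set (m := Rmin 1 (e / 3)).
  assert (Hm : 0 < m) by (apply Rmin_glb_lt; lra).
  exists (/ m ^ 3). split; [apply Rinv_0_lt_compat, pow_lt; lra|]. intros a Ha.
  assert (Hlin : m * (1 + a) <= exp (e * a / 3)).
  { assert (m <= 1) by apply Rmin_l. assert (m <= e / 3) by apply Rmin_r.
    pose proof (exp_ineq1_le (e * a / 3)). nra. }
  replace (e * a) with (e * a / 3 + (e * a / 3 + e * a / 3)) by field.
  rewrite !exp_plus.
  replace (exp (e * a / 3) * (exp (e * a / 3) * exp (e * a / 3)))
    with (exp (e * a / 3) ^ 3) by ring.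
  apply Rmult_le_reg_l with (m ^ 3); [apply pow_lt; lra|].
  rewrite <- Rmult_assoc, Rinv_r, Rmult_1_l, <- Rpow_mult_distr by (apply pow_nonzero; lra).
  apply pow_incr. split; [nra | exact Hlin].
Qed.

Lemma cube_mul_exp_bounded e h0 : 0 < e ->
  exists B, forall y, y <= h0 -> (1 + Rabs y) ^ 3 * exp (e * y) <= B.
Proof.
  intros He. destruct (one_add_cube_le_exp e He) as [K [HK HKe]].
  exists (K * exp (2 * e * Rabs h0)). intros y Hy.
  apply Rle_trans with (K * exp (e * Rabs y) * exp (e * y)).
  { apply Rmult_le_compat_r; [left; apply exp_pos | apply HKe, Rabs_pos]. }
  rewrite Rmult_assoc, <- exp_plus.
  apply Rmult_le_compat_l; [lra | apply exp_le_compat].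
  pose proof (Rle_abs h0). pose proof (Rabs_pos h0). unfold Rabs at 1; destruct Rcase_abs; nra.
Qed.

Lemma abs_le_one_add_abs_cube u y : Rabs u <= 1 + Rabs y -> Rabs u <= (1 + Rabs y) ^ 3.
Proof. intros Hu. pose proof (Rabs_pos y). simpl. nra. Qed.

Lemma abs_mul_le_one_add_abs_cube u y : Rabs u <= 1 + Rabs y -> Rabs (u * y) <= (1 + Rabs y) ^ 3.
Proof.
  intros Hu. rewrite Rabs_mult. pose proof (Rabs_pos y). pose proof (Rabs_pos u). simpl. nra.
Qed.

Lemma exp_mul_remainder_le (u y b d h0 : R) :
  0 < b -> Rabs d <= b / 2 -> y <= h0 -> Rabs u <= 1 + Rabs y ->
  Rabs (u * exp ((b + d) * y) - u * exp (b * y) - d * (u * y * exp (b * y)))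
  <= d ^ 2 * exp (b * Rabs h0) * ((1 + Rabs y) ^ 3 * exp (b / 2 * y)).
Proof.
  intros Hb Hd Hy Hu.
  replace (u * exp ((b + d) * y) - u * exp (b * y) - d * (u * y * exp (b * y)))
    with (u * exp (b * y) * (exp (d * y) - 1 - d * y))
    by (replace ((b + d) * y) with (b * y + d * y) by ring; rewrite exp_plus; ring).
  rewrite !Rabs_mult, (Rabs_pos_eq (exp (b * y))) by (left; apply exp_pos).
  assert (Htaylor : Rabs (exp (d * y) - 1 - d * y) <= d ^ 2 * (y ^ 2 * exp (b / 2 * Rabs y))).
  { eapply Rle_trans; [apply exp_sub_1_sub_abs_le|].
    rewrite Rpow_mult_distr, Rmult_assoc. apply Rmult_le_compat_l; [apply pow2_ge_0|].
    apply Rmult_le_compat_l; [apply pow2_ge_0|]. apply exp_le_compat.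
    rewrite Rabs_mult. apply Rmult_le_compat_r; [apply Rabs_pos | exact Hd]. }
  assert (Hshift : exp (b * y) * exp (b / 2 * Rabs y) <= exp (b * Rabs h0) * exp (b / 2 * y)).
  { rewrite <- !exp_plus. apply exp_le_compat.
    pose proof (Rle_abs h0). pose proof (Rabs_pos h0). unfold Rabs at 1; destruct Rcase_abs; nra. }
  assert (Hcube : Rabs u * y ^ 2 <= (1 + Rabs y) ^ 3).
  { rewrite <- pow2_abs. pose proof (Rabs_pos y). pose proof (Rabs_pos u). simpl. nra. }
  apply Rle_trans with (d ^ 2 * ((Rabs u * y ^ 2) * (exp (b * y) * exp (b / 2 * Rabs y)))).
  { apply (Rmult_le_compat_l (Rabs u * exp (b * y))) in Htaylor.
    - lra.
    - apply Rmult_le_pos; [apply Rabs_pos | left; apply exp_pos]. }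
  replace (d ^ 2 * exp (b * Rabs h0) * ((1 + Rabs y) ^ 3 * exp (b / 2 * y)))
    with (d ^ 2 * ((1 + Rabs y) ^ 3 * (exp (b * Rabs h0) * exp (b / 2 * y)))) by ring.
  apply Rmult_le_compat_l; [apply pow2_ge_0|].
  apply Rmult_le_compat; auto.
  - apply Rmult_le_pos; [apply Rabs_pos | apply pow2_ge_0].
  - apply Rmult_le_pos; left; apply exp_pos.
Qed.

Lemma is_derive_of_quadratic_remainder (F : R -> R) (x l delta K : R) :
  0 < delta ->
  (forall d, Rabs d <= delta -> Rabs (F (x + d) - F x - d * l) <= d ^ 2 * K) ->
  is_derive F x l.
Proof.
  intros Hdelta Hrem. apply is_derive_Reals. intros eps Heps.
  assert (HK : 0 < Rabs K + 1) by (pose proof (Rabs_pos K); lra).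
  assert (Hpos : 0 < Rmin delta (eps / (Rabs K + 1)))
    by (apply Rmin_glb_lt; [lra | apply Rdiv_lt_0_compat; lra]).
  exists (mkposreal _ Hpos). intros d Hd0 Hd. simpl in Hd.
  assert (Hdd : Rabs d <= delta) by (pose proof (Rmin_l delta (eps / (Rabs K + 1))); lra).
  assert (Hde : Rabs d * (Rabs K + 1) < eps).
  { apply Rlt_le_trans with (eps / (Rabs K + 1) * (Rabs K + 1)); [|right; field; lra].
    apply Rmult_lt_compat_r; [lra|]. pose proof (Rmin_r delta (eps / (Rabs K + 1))). lra. }
  assert (Hd' : 0 < Rabs d) by (apply Rabs_pos_lt; exact Hd0).
  replace ((F (x + d) - F x) / d - l) with ((F (x + d) - F x - d * l) / d) by (field; exact Hd0).
  unfold Rdiv. rewrite Rabs_mult, Rabs_inv.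
  apply Rle_lt_trans with (d ^ 2 * K * / Rabs d).
  { apply Rmult_le_compat_r; [left; apply Rinv_0_lt_compat; lra | apply Hrem, Hdd]. }
  rewrite <- pow2_abs. replace (Rabs d ^ 2 * K * / Rabs d) with (Rabs d * K) by (field; lra).
  pose proof (Rle_abs K). nra.
Qed.

(** * Integrals over the line dominated by [1 / (1 + x^2)] *)

Local Notation is_Int_R g l :=
  (is_RInt_gen g (Rbar_locally m_infty) (Rbar_locally p_infty) l).

Ltac solve_continuous :=
  repeat match goal with
  | H : forall x, continuous ?g x |- continuous ?g _ => apply H
  | H : forall x, continuous ?g x |- continuous (fun y => ?g y) _ => apply H
  | |- continuous (fun _ => ?c) _ => apply continuous_const
  | |- continuous (fun y => y) _ => apply continuous_id
  | |- continuous (fun y => @?a y + @?b y) _ => apply (continuous_plus (V := R_NormedModule) a b)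
  | |- continuous (fun y => @?a y - @?b y) _ => apply (continuous_minus (V := R_NormedModule) a b)
  | |- continuous (fun y => @?a y * @?b y) _ => apply (continuous_mult (K := R_AbsRing) a b)
  end.

Definition cauchy_weight (x : R) : R := / (1 + x ^ 2).

Lemma one_add_sq_pos x : 0 < 1 + x ^ 2.
Proof. pose proof (pow2_ge_0 x). lra. Qed.

Lemma cauchy_weight_pos x : 0 < cauchy_weight x.
Proof. apply Rinv_0_lt_compat, one_add_sq_pos. Qed.

Lemma continuous_cauchy_weight x : continuous cauchy_weight x.
Proof.
  apply (ex_derive_continuous (V := R_NormedModule)). unfold cauchy_weight. auto_derive.
  pose proof (one_add_sq_pos x). lra.
Qed.

Lemma is_RInt_cauchy_weight a b : is_RInt cauchy_weight a b (atan b - atan a).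
Proof.
  apply (is_RInt_derive atan cauchy_weight).
  - intros x _. apply is_derive_Reals, derivable_pt_lim_atan.
  - intros x _. apply continuous_cauchy_weight.
Qed.

Lemma filter_prod_infty (Q : R * R -> Prop) (a0 b0 : R) :
  (forall a b, a < a0 -> b0 < b -> Q (a, b)) ->
  filter_prod (Rbar_locally m_infty) (Rbar_locally p_infty) Q.
Proof.
  intros HQ. apply (Filter_prod _ _ _ (fun a => a < a0) (fun b => b0 < b)).
  - exists a0. auto.
  - exists b0. auto.
  - exact HQ.
Qed.

Lemma ex_RInt_continuous_R (g : R -> R) a b : (forall x, continuous g x) -> ex_RInt g a b.
Proof. intros Hc. apply (ex_RInt_continuous (V := R_CompleteNormedModule)). auto. Qed.

Lemma RInt_le_of_cauchy_bound (g : R -> R) (D a b : R) :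
  0 <= D -> (forall x, continuous g x) -> (forall x, g x <= D * cauchy_weight x) ->
  a <= b -> RInt g a b <= D * PI.
Proof.
  intros HD Hc Hg Hab.
  assert (Hw : forall x, continuous (fun x => D * cauchy_weight x) x)
    by (intros; solve_continuous; apply continuous_cauchy_weight).
  apply Rle_trans with (RInt (fun x => D * cauchy_weight x) a b).
  { apply RInt_le; auto using ex_RInt_continuous_R. }
  rewrite (is_RInt_unique _ a b (D * (atan b - atan a)))
    by exact (is_RInt_scal _ _ _ D _ (is_RInt_cauchy_weight a b)).
  pose proof (atan_bound a). pose proof (atan_bound b).
  apply Rmult_le_compat_l; lra.
Qed.

(* The improper integral of a nonnegative [g] is the supremum of its integrals over
   compact intervals. *)
Lemma is_Int_R_nonneg (g : R -> R) (D : R) :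
  (forall x, continuous g x) -> (forall x, 0 <= g x <= D * cauchy_weight x) ->
  exists l, is_Int_R g l /\ l <= D * PI /\ (forall a b, a <= b -> RInt g a b <= l).
Proof.
  intros Hc Hg.
  assert (HD : 0 <= D).
  { destruct (Hg 0) as [H0 H1]. pose proof (cauchy_weight_pos 0). nra. }
  assert (Hbound : forall a b, a <= b -> RInt g a b <= D * PI).
  { intros a b. apply RInt_le_of_cauchy_bound; auto. apply Hg. }
  set (E := fun y => exists a b, a <= b /\ y = RInt g a b).
  destruct (completeness E) as [l [Hub Hlub]].
  - exists (D * PI). intros y [a [b [Hab ->]]]. auto.
  - exists (RInt g 0 0), 0, 0. split; [lra | reflexivity].
  assert (Hle : forall a b, a <= b -> RInt g a b <= l)
    by (intros a b Hab; apply Hub; exists a, b; auto).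
  exists l. split; [|split; [apply Hlub; intros y [a [b [Hab ->]]]; auto | exact Hle]].
  intros P [eps HP].
  assert (Happrox : exists a0 b0, a0 <= b0 /\ l - eps < RInt g a0 b0).
  { apply NNPP. intros Hn. pose proof (cond_pos eps).
    assert (l <= l - eps); [|lra].
    apply Hlub. intros y [a [b [Hab ->]]].
    apply Rnot_lt_le. intros Hlt. apply Hn. exists a, b. auto. }
  destruct Happrox as [a0 [b0 [Hab0 Hl0]]].
  apply (filter_prod_infty _ a0 b0). intros a b Ha Hb. simpl.
  exists (RInt g a b). split.
  { apply (RInt_correct (V := R_CompleteNormedModule)), ex_RInt_continuous_R, Hc. }
  apply HP.
  assert (Hmono : RInt g a0 b0 <= RInt g a b).
  { rewrite <- (RInt_Chasles g a a0 b), <- (RInt_Chasles g a0 b0 b)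
      by apply ex_RInt_continuous_R, Hc.
    assert (0 <= RInt g a a0)
      by (apply RInt_ge_0; [lra | apply ex_RInt_continuous_R, Hc | intros; apply Hg]).
    assert (0 <= RInt g b0 b)
      by (apply RInt_ge_0; [lra | apply ex_RInt_continuous_R, Hc | intros; apply Hg]).
    change (RInt g a0 b0 <= RInt g a a0 + (RInt g a0 b0 + RInt g b0 b)). lra. }
  pose proof (Hle a b ltac:(lra)).
  change (Rabs (RInt g a b - l) < eps). apply Rabs_def1; lra.
Qed.

Lemma is_Int_R_Int_R (g : R -> R) : ex_Int_R g -> is_Int_R g (Int_R g).
Proof. exact (RInt_gen_correct (V := R_CompleteNormedModule) g). Qed.

Lemma Int_R_unique (g : R -> R) (l : R) : is_Int_R g l -> Int_R g = l.
Proof. exact (is_RInt_gen_unique (V := R_CompleteNormedModule) g l). Qed.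

Lemma ex_Int_R_plus (g1 g2 : R -> R) :
  ex_Int_R g1 -> ex_Int_R g2 -> ex_Int_R (fun x => g1 x + g2 x).
Proof. intros [l1 H1] [l2 H2]. exists (l1 + l2). exact (is_RInt_gen_plus _ _ _ _ H1 H2). Qed.

Lemma Int_R_plus (g1 g2 : R -> R) :
  ex_Int_R g1 -> ex_Int_R g2 -> Int_R (fun x => g1 x + g2 x) = Int_R g1 + Int_R g2.
Proof.
  intros H1 H2. apply Int_R_unique.
  exact (is_RInt_gen_plus _ _ _ _ (is_Int_R_Int_R _ H1) (is_Int_R_Int_R _ H2)).
Qed.

Lemma ex_Int_R_scal (c : R) (g : R -> R) : ex_Int_R g -> ex_Int_R (fun x => c * g x).
Proof. intros [l H]. exists (c * l). exact (is_RInt_gen_scal _ c _ H). Qed.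

Lemma Int_R_scal (c : R) (g : R -> R) : ex_Int_R g -> Int_R (fun x => c * g x) = c * Int_R g.
Proof. intros H. apply Int_R_unique. exact (is_RInt_gen_scal _ c _ (is_Int_R_Int_R _ H)). Qed.

Lemma Int_R_ext (g1 g2 : R -> R) : (forall x, g1 x = g2 x) -> Int_R g1 = Int_R g2.
Proof. intros H. f_equal. apply functional_extensionality, H. Qed.

Lemma ex_Int_R_cauchy_bound (g : R -> R) (D : R) :
  (forall x, continuous g x) -> (forall x, Rabs (g x) <= D * cauchy_weight x) ->
  ex_Int_R g /\ Rabs (Int_R g) <= D * PI.
Proof.
  intros Hc Hg.
  assert (Hw : forall x, continuous (fun x => D * cauchy_weight x) x)
    by (intros; solve_continuous; apply continuous_cauchy_weight).
  destruct (is_Int_R_nonneg (fun x => g x + D * cauchy_weight x) (2 * D)) as [l1 [H1 _]].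
  { intros x. solve_continuous. }
  { intros x. specialize (Hg x). apply Rabs_le_between in Hg. lra. }
  destruct (is_Int_R_nonneg (fun x => D * cauchy_weight x) D) as [l2 [H2 [Hl2 _]]].
  { exact Hw. }
  { intros x. specialize (Hg x). pose proof (Rabs_pos (g x)). lra. }
  assert (Hg' : is_Int_R g (l1 - l2)).
  { apply (is_RInt_gen_ext (fun x => minus (g x + D * cauchy_weight x) (D * cauchy_weight x))).
    - apply (filter_prod_infty _ 0 0). intros a b _ _ x _.
      change (g x + D * cauchy_weight x - D * cauchy_weight x = g x). ring.
    - exact (is_RInt_gen_minus _ _ _ _ H1 H2). }
  split; [exists (l1 - l2); exact Hg'|].
  apply Rle_trans with l2; [|exact Hl2].
  apply (RInt_gen_norm g (fun x => D * cauchy_weight x) (Int_R g) l2).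
  - apply (filter_prod_infty _ 0 0). simpl. intros; lra.
  - apply (filter_prod_infty _ 0 0). intros; apply Hg.
  - apply is_Int_R_Int_R. exists (l1 - l2). exact Hg'.
  - exact H2.
Qed.

Lemma is_lim_div_Rabs (K : R) (x : Rbar) :
  x = p_infty \/ x = m_infty -> is_lim (fun t => K / Rabs t) x 0.
Proof.
  intros Hx. replace (Finite 0) with (Rbar_div K p_infty) by (simpl; f_equal; ring).
  apply (is_lim_div (fun _ => K) Rabs).
  - apply is_lim_const.
  - replace p_infty with (Rbar_abs x) by (destruct Hx; subst; reflexivity).
    apply is_lim_Rabs, is_lim_id.
  - discriminate.
  - exact I.
Qed.

Lemma affine_mul_cauchy_weight_le m x :
  1 <= Rabs x -> Rabs (x - m) * cauchy_weight x <= (1 + Rabs m) / Rabs x.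
Proof.
  intros Hx. unfold cauchy_weight. rewrite <- pow2_abs.
  assert (Htri : Rabs (x - m) <= Rabs x + Rabs m)
    by (unfold Rminus; rewrite <- (Rabs_Ropp m); apply Rabs_triang).
  pose proof (Rabs_pos m). pose proof (Rabs_pos (x - m)).
  apply Rmult_le_reg_r with (Rabs x * (1 + Rabs x ^ 2)); [nra|].
  replace (Rabs (x - m) * / (1 + Rabs x ^ 2) * (Rabs x * (1 + Rabs x ^ 2)))
    with (Rabs (x - m) * Rabs x) by (field; nra).
  replace ((1 + Rabs m) / Rabs x * (Rabs x * (1 + Rabs x ^ 2)))
    with ((1 + Rabs m) * (1 + Rabs x ^ 2)) by (field; lra).
  assert (Rabs (x - m) * Rabs x <= (Rabs x + Rabs m) * Rabs x) by (apply Rmult_le_compat_r; lra).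
  assert (Rabs m * Rabs x <= Rabs m * (1 + Rabs x ^ 2)) by (apply Rmult_le_compat_l; nra).
  nra.
Qed.

Lemma filterlim_affine_cauchy_bound (v : R -> R) (C m : R) (x : Rbar) :
  x = p_infty \/ x = m_infty -> 0 <= C ->
  (forall t, Rabs (v t) <= C * (Rabs (t - m) * cauchy_weight t)) ->
  filterlim v (Rbar_locally x) (locally 0).
Proof.
  intros Hx HC Hv.
  assert (Hlim : is_lim v x 0); [|destruct Hx; subst; exact Hlim].
  apply (is_lim_le_le_loc (fun t => - (C * (1 + Rabs m)) / Rabs t)
                          (fun t => C * (1 + Rabs m) / Rabs t)).
  2, 3: apply is_lim_div_Rabs, Hx.
  assert (Hev : Rbar_locally' x (fun t => 1 <= Rabs t)).
  { destruct Hx; subst; [exists 1 | exists (-1)];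
      intros t Ht; unfold Rabs; destruct Rcase_abs; lra. }
  revert Hev. apply filter_imp. intros t Ht.
  pose proof (Rmult_le_compat_l C _ _ HC (affine_mul_cauchy_weight_le m t Ht)).
  specialize (Hv t). apply Rabs_le_between in Hv. unfold Rdiv in *. lra.
Qed.

(** * Tails of powers of a regularly varying density *)

Lemma exists_upper_bound3 a b c : exists m, a <= m /\ b <= m /\ c <= m.
Proof.
  exists (Rmax a (Rmax b c)).
  pose proof (Rmax_l a (Rmax b c)). pose proof (Rmax_r a (Rmax b c)).
  pose proof (Rmax_l b c). pose proof (Rmax_r b c). lra.
Qed.

Lemma le_of_doubling (phi : R -> R) (T B : R) :
  0 < T ->
  (forall t, T <= t -> phi (t * 2) <= phi t) ->
  (forall t, T <= t <= T * 2 -> phi t <= B) ->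
  forall x, T <= x -> phi x <= B.
Proof.
  intros HT Hdbl Hbase.
  assert (Hn : forall n t, T <= t <= T * 2 ^ S n -> phi t <= B).
  { induction n as [|n IH]; intros t Ht; simpl in Ht.
    - apply Hbase. lra.
    - destruct (Rle_lt_dec t (T * 2)) as [Hl|Hl]; [apply Hbase; lra|].
      replace t with (t / 2 * 2) by field.
      apply Rle_trans with (phi (t / 2)); [apply Hdbl; lra|].
      apply IH. simpl. lra. }
  intros x Hx.
  destruct (Pow_x_infinity 2 ltac:(rewrite Rabs_pos_eq; lra) (x / T)) as [N HN].
  specialize (HN N (le_n N)). rewrite Rabs_pos_eq in HN by (left; apply pow_lt; lra).
  apply (Hn N). split; [exact Hx|].
  apply Rge_le, (Rmult_le_compat_l T) in HN; [|lra].
  replace (T * (x / T)) with x in HN by (field; lra). simpl. pose proof (pow_lt 2 N). nra.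
Qed.

Lemma geometric_growth_unbounded (G : R -> R) (c T : R) :
  1 < c -> 0 < T -> 0 < G T -> (forall t, T <= t -> c * G t <= G (t * 2)) ->
  forall K, exists t, T <= t /\ K <= G t.
Proof.
  intros Hc HT HG Hgrow K.
  assert (Hn : forall n, T <= T * 2 ^ n /\ c ^ n * G T <= G (T * 2 ^ n)).
  { induction n as [|n [IH1 IH2]]; simpl.
    - rewrite Rmult_1_r, Rmult_1_l. lra.
    - replace (T * (2 * 2 ^ n)) with (T * 2 ^ n * 2) by ring.
      pose proof (Hgrow _ IH1).
      assert (c * (c ^ n * G T) <= c * G (T * 2 ^ n)) by (apply Rmult_le_compat_l; lra).
      split; lra. }
  destruct (Pow_x_infinity c ltac:(rewrite Rabs_pos_eq; lra) (K / G T)) as [N HN].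
  specialize (HN N (le_n N)). rewrite Rabs_pos_eq in HN by (left; apply pow_lt; lra).
  destruct (Hn N) as [HN1 HN2]. exists (T * 2 ^ N). split; [exact HN1|].
  apply Rge_le, (Rmult_le_compat_r (G T)) in HN; [|lra].
  replace (K / G T * G T) with K in HN by (field; lra). lra.
Qed.

(* In Rocq [b / 0 = 0], so the hypothesis [c < b / a] with [c > 1] also excludes [a = 0]. *)
Lemma pos_of_ratio_gt a b c : 1 < c -> a <= b -> c < b / a -> 0 < a /\ c * a < b.
Proof.
  intros Hc Hab Hr.
  destruct (Rtotal_order a 0) as [Ha|[Ha|Ha]].
  - exfalso. assert (b / a * a = b) by (field; lra). nra.
  - exfalso. subst. unfold Rdiv in Hr. rewrite Rinv_0, Rmult_0_r in Hr. lra.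
  - split; [exact Ha|]. assert (b / a * a = b) by (field; lra). nra.
Qed.

(* Once [eps (c - 1) G t >= ln 4], doubling [t] does not increase [t^2 e^(-eps G t)]. *)
Lemma sq_mul_exp_neg_bounded (G : R -> R) (c m0 M eps : R) :
  1 < c -> 0 < eps ->
  (forall x y, m0 <= x <= y -> G x <= G y) ->
  (forall t, M < t -> c < G (t * 2) / G t) ->
  exists B T, forall x, T <= x -> x ^ 2 * exp (- (eps * G x)) <= B.
Proof.
  intros Hc Heps Hmon0 Hratio0.
  destruct (exists_upper_bound3 1 m0 (M + 1)) as [T0 [HT0 [Hm0 HM]]].
  assert (Hmon : forall x y, T0 <= x <= y -> G x <= G y) by (intros; apply Hmon0; lra).
  assert (Hratio : forall t, T0 <= t -> c < G (t * 2) / G t) by (intros; apply Hratio0; lra).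
  clear Hmon0 Hratio0.
  assert (Hgrow : forall t, T0 <= t -> 0 < G t /\ c * G t < G (t * 2)).
  { intros t Ht. apply pos_of_ratio_gt; [exact Hc | apply Hmon; lra | apply Hratio, Ht]. }
  set (K := ln 4 / (eps * (c - 1))).
  destruct (geometric_growth_unbounded G c T0 Hc ltac:(lra) (proj1 (Hgrow T0 (Rle_refl _))))
    with (K := K) as [T [HT HKT]].
  { intros t Ht. left. apply Hgrow, Ht. }
  assert (HGT : forall t, T <= t -> G T <= G t) by (intros; apply Hmon; lra).
  set (phi := fun t => t ^ 2 * exp (- (eps * G t))).
  assert (Hdbl : forall t, T <= t -> phi (t * 2) <= phi t).
  { intros t Ht. unfold phi.
    destruct (Hgrow t ltac:(lra)) as [_ Ht2].
    assert (Hln : eps * G t + ln 4 <= eps * G (t * 2)).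
    { assert (eps * (c - 1) * K = ln 4) by (unfold K; field; lra).
      pose proof (HGT t Ht).
      assert (eps * (c - 1) * K <= eps * (c - 1) * G t)
        by (apply Rmult_le_compat_l; [apply Rmult_le_pos|]; lra).
      nra. }
    assert (Hexp : 4 * exp (- (eps * G (t * 2))) <= exp (- (eps * G t))).
    { replace 4 with (exp (ln 4)) at 1 by (apply exp_ln; lra).
      rewrite <- exp_plus. apply exp_le_compat. lra. }
    replace ((t * 2) ^ 2) with (t ^ 2 * 4) by ring.
    pose proof (pow2_ge_0 t). nra. }
  exists ((T * 2) ^ 2 * exp (- (eps * G T))), T.
  apply le_of_doubling; [lra | exact Hdbl|].
  intros t Ht. unfold phi.
  assert (t ^ 2 <= (T * 2) ^ 2) by (apply pow_incr; lra).
  assert (exp (- (eps * G t)) <= exp (- (eps * G T)))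
    by (apply exp_le_compat; pose proof (HGT t (proj1 Ht)); nra).
  apply Rmult_le_compat; [apply pow2_ge_0 | left; apply exp_pos | |]; assumption.
Qed.

Lemma le_cauchy_weight_of_tails (g : R -> R) (M B T : R) :
  1 <= T -> (forall x, 0 <= g x <= M) -> (forall x, T <= Rabs x -> x ^ 2 * g x <= B) ->
  exists C, forall x, g x <= C * cauchy_weight x.
Proof.
  intros HT Hg Htail.
  exists (2 * B + (1 + T ^ 2) * M). intros x.
  assert (HB : 0 <= B).
  { specialize (Htail T ltac:(rewrite Rabs_pos_eq; lra)). pose proof (Hg T).
    pose proof (pow2_ge_0 T). nra. }
  assert (HM : 0 <= M) by (pose proof (Hg 0); lra).
  unfold cauchy_weight. pose proof (one_add_sq_pos x).
  apply (Rmult_le_reg_r (1 + x ^ 2)); [lra|].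
  rewrite Rmult_assoc, Rinv_l, Rmult_1_r by lra.
  pose proof (Hg x). rewrite <- pow2_abs in *.
  destruct (Rle_lt_dec T (Rabs x)) as [Hx|Hx].
  - specialize (Htail x Hx). rewrite <- pow2_abs in Htail.
    assert (1 <= Rabs x ^ 2) by nra.
    assert (0 <= (1 + T ^ 2) * M) by (apply Rmult_le_pos; nra).
    nra.
  - assert (Rabs x ^ 2 <= T ^ 2) by (pose proof (Rabs_pos x); nra).
    assert (0 <= 2 * B) by lra. nra.
Qed.

Lemma is_lim_eventually_gt (g : R -> R) (x : Rbar) (L c : R) :
  c < L -> is_lim g x L -> Rbar_locally' x (fun t => c < g t).
Proof.
  intros Hc Hl. apply Hl.
  assert (Hpos : 0 < L - c) by lra.
  exists (mkposreal _ Hpos). intros y Hy.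
  change (Rabs (y - L) < L - c) in Hy. apply Rabs_def2 in Hy. lra.
Qed.

Lemma regularly_varying_doubling (H : R -> R) (alpha : R) :
  0 < alpha -> regularly_varying H alpha ->
  exists c, 1 < c /\
    (exists M, forall t, M < t -> c < H (t * 2) / H t) /\
    (exists M, forall t, t < M -> c < H (t * 2) / H t).
Proof.
  intros Ha Hrv. destruct (Hrv 2 ltac:(lra)) as [Hp Hm].
  assert (H2a : 1 < Rpower 2 alpha).
  { rewrite <- (Rpower_O 2) at 1 by lra. apply Rpower_lt; lra. }
  exists ((1 + Rpower 2 alpha) / 2). split; [lra|]. split.
  - apply (is_lim_eventually_gt _ p_infty (Rpower 2 alpha)); [lra | exact Hp].
  - apply (is_lim_eventually_gt _ m_infty (Rpower 2 alpha)); [lra | exact Hm].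
Qed.

Lemma unimodal_le_mode (f : R -> R) (mu : R) : unimodal_at f mu -> forall x, f x <= f mu.
Proof.
  intros [Hinc Hdec] x. destruct (Rle_lt_dec x mu).
  - apply Hinc; lra.
  - apply Hdec; lra.
Qed.

Lemma fpow_eq_exp_Hpot f eps x : fpow f eps x = exp (- (eps * Hpot f x)).
Proof. unfold fpow, Rpower, Hpot. f_equal. ring. Qed.

Lemma fpow_le_cauchy_weight (f : R -> R) (mu alpha : R) :
  (forall x, 0 < f x) -> unimodal_at f mu ->
  0 < alpha -> regularly_varying (Hpot f) alpha ->
  forall eps, 0 < eps -> exists C, forall x, fpow f eps x <= C * cauchy_weight x.
Proof.
  intros fpos Hu Ha Hrv eps Heps.
  destruct (regularly_varying_doubling _ _ Ha Hrv) as [c [Hc [[Mp HMp] [Mm HMm]]]].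
  pose proof (unimodal_le_mode f mu Hu) as Hmode. destruct Hu as [Hinc Hdec].
  destruct (sq_mul_exp_neg_bounded (Hpot f) c mu Mp eps Hc Heps) as [Bp [Tp HBp]].
  { intros x y Hxy. unfold Hpot. apply Ropp_le_contravar, ln_le; [apply fpos | apply Hdec; lra]. }
  { exact HMp. }
  destruct (sq_mul_exp_neg_bounded (fun t => Hpot f (- t)) c (- mu) (- Mm) eps Hc Heps)
    as [Bm [Tm HBm]].
  { intros x y Hxy. unfold Hpot. apply Ropp_le_contravar, ln_le; [apply fpos | apply Hinc; lra]. }
  { intros t Ht. replace (- (t * 2)) with (- t * 2) by ring. apply HMm. lra. }
  destruct (exists_upper_bound3 1 Tp Tm) as [T [HT1 [HTp HTm]]].
  apply (le_cauchy_weight_of_tails _ (Rpower (f mu) eps) (Rmax Bp Bm) T HT1).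
  - intros x. split; [left; apply exp_pos|].
    apply Rle_Rpower_l; [lra | split; [apply fpos | apply Hmode]].
  - intros x Hx. unfold Rabs in Hx. destruct Rcase_abs.
    + specialize (HBm (- x) ltac:(lra)). rewrite Ropp_involutive, <- fpow_eq_exp_Hpot in HBm.
      replace ((- x) ^ 2) with (x ^ 2) in HBm by ring. pose proof (Rmax_r Bp Bm). lra.
    + specialize (HBp x ltac:(lra)). rewrite <- fpow_eq_exp_Hpot in HBp.
      pose proof (Rmax_l Bp Bm). lra.
Qed.

(** * The power family [f^b] *)

Lemma fpow_pos f b x : 0 < fpow f b x.
Proof. apply exp_pos. Qed.

Lemma fpow_plus f a b x : fpow f (a + b) x = fpow f a x * fpow f b x.
Proof. unfold fpow, Rpower. rewrite <- exp_plus. f_equal. ring. Qed.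

Section PowerFamily.

Variables (f : R -> R) (mu : R).
Hypothesis f_pos : forall x, 0 < f x.
Hypothesis f_derivable : forall x, ex_derive f x.
Hypothesis Df_derivable : forall x, ex_derive (Derive f) x.
Hypothesis f_le_mode : forall x, f x <= f mu.
Hypothesis fpow_tail :
  forall eps, 0 < eps -> exists C, forall x, fpow f eps x <= C * cauchy_weight x.

Lemma hlog_le_mode x : hlog f x <= hlog f mu.
Proof. apply ln_le; auto. Qed.

Lemma is_derive_hlog x : is_derive (hlog f) x (Derive f x / f x).
Proof.
  unfold hlog. pose proof (f_pos x). pose proof (f_derivable x).
  auto_derive; [auto | rewrite Rmult_1_l; reflexivity].
Qed.

Lemma Derive_hlog : Derive (hlog f) = fun x => Derive f x / f x.
Proof. apply functional_extensionality. intros x. apply is_derive_unique, is_derive_hlog. Qed.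

Lemma is_derive_fpow b x : is_derive (fpow f b) x (b * Derive (hlog f) x * fpow f b x).
Proof.
  rewrite Derive_hlog. unfold fpow, Rpower. pose proof (f_pos x). pose proof (f_derivable x).
  auto_derive; [auto | rewrite Rmult_1_l; reflexivity].
Qed.

Lemma continuous_hlog x : continuous (hlog f) x.
Proof. apply (ex_derive_continuous (V := R_NormedModule)). eexists. apply is_derive_hlog. Qed.

Lemma continuous_fpow b x : continuous (fpow f b) x.
Proof. apply (ex_derive_continuous (V := R_NormedModule)). eexists. apply is_derive_fpow. Qed.

Lemma continuous_Derive_hlog x : continuous (Derive (hlog f)) x.
Proof.
  apply (ex_derive_continuous (V := R_NormedModule)). rewrite Derive_hlog.
  pose proof (f_pos x). pose proof (f_derivable x). pose proof (Df_derivable x).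
  auto_derive. repeat split; auto; lra.
Qed.

(* [(1 + |h|)^3 f^b = ((1 + |h|)^3 e^(b h / 2)) f^(b / 2)], with the first factor bounded
   because [h <= h mu]. *)
Lemma cube_hlog_fpow_le b : 0 < b ->
  exists D, forall x, (1 + Rabs (hlog f x)) ^ 3 * fpow f b x <= D * cauchy_weight x.
Proof.
  intros Hb.
  destruct (fpow_tail (b / 2)) as [C HC]; [lra|].
  destruct (cube_mul_exp_bounded (b / 2) (hlog f mu)) as [B HB]; [lra|].
  exists (B * C). intros x.
  replace b with (b / 2 + b / 2) at 1 by field.
  rewrite fpow_plus, <- Rmult_assoc, (Rmult_assoc B).
  apply Rmult_le_compat.
  - pose proof (Rabs_pos (hlog f x)).
    apply Rmult_le_pos; [apply pow_le; lra | left; apply fpow_pos].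
  - left; apply fpow_pos.
  - apply HB, hlog_le_mode.
  - apply HC.
Qed.

Lemma ex_Int_R_cube_hlog_bound (g : R -> R) b : 0 < b -> (forall x, continuous g x) ->
  (forall x, Rabs (g x) <= (1 + Rabs (hlog f x)) ^ 3 * fpow f b x) -> ex_Int_R g.
Proof.
  intros Hb Hc Hg. destruct (cube_hlog_fpow_le b Hb) as [D HD].
  apply (ex_Int_R_cauchy_bound g D Hc). intros x. eapply Rle_trans; [apply Hg | apply HD].
Qed.

Lemma ex_Int_R_mul_fpow (u : R -> R) b : 0 < b -> (forall x, continuous u x) ->
  (forall x, Rabs (u x) <= (1 + Rabs (hlog f x)) ^ 3) -> ex_Int_R (fun x => u x * fpow f b x).
Proof.
  intros Hb Hc Hu. apply (ex_Int_R_cube_hlog_bound _ b Hb).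
  - intros x. pose proof (continuous_fpow b). solve_continuous.
  - intros x. rewrite Rabs_mult, (Rabs_pos_eq (fpow f b x)) by (left; apply fpow_pos).
    apply Rmult_le_compat_r; [left; apply fpow_pos | apply Hu].
Qed.

Lemma ex_Int_R_fpow b : 0 < b -> ex_Int_R (fpow f b).
Proof.
  intros Hb. apply (ex_Int_R_cube_hlog_bound _ b Hb); [apply continuous_fpow|].
  intros x. rewrite Rabs_pos_eq by (left; apply fpow_pos).
  rewrite <- (Rmult_1_l (fpow f b x)) at 1. apply Rmult_le_compat_r; [left; apply fpow_pos|].
  pose proof (Rabs_pos (hlog f x)). apply pow_R1_Rle. lra.
Qed.

Lemma Int_R_mul_fpow_remainder_le (u : R -> R) b : 0 < b -> (forall x, continuous u x) ->
  (forall x, Rabs (u x) <= 1 + Rabs (hlog f x)) ->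
  exists K, forall d, Rabs d <= b / 2 ->
    Rabs (Int_R (fun x => u x * fpow f (b + d) x) - Int_R (fun x => u x * fpow f b x)
          - d * Int_R (fun x => u x * hlog f x * fpow f b x)) <= d ^ 2 * K.
Proof.
  intros Hb Hc Hu.
  set (K0 := exp (b * Rabs (hlog f mu))).
  destruct (cube_hlog_fpow_le (b / 2)) as [D HD]; [lra|].
  exists (K0 * D * PI). intros d Hd.
  assert (Hbd : 0 < b + d) by (apply Rabs_le_between in Hd; lra).
  assert (Hcube : forall x, Rabs (u x) <= (1 + Rabs (hlog f x)) ^ 3)
    by (intros; apply abs_le_one_add_abs_cube, Hu).
  assert (Hcube_h : forall x, Rabs (u x * hlog f x) <= (1 + Rabs (hlog f x)) ^ 3)
    by (intros; apply abs_mul_le_one_add_abs_cube, Hu).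
  assert (Hch : forall x, continuous (fun x => u x * hlog f x) x)
    by (intros; pose proof continuous_hlog; solve_continuous).
  pose proof (is_Int_R_Int_R _ (ex_Int_R_mul_fpow u (b + d) Hbd Hc Hcube)) as H1.
  pose proof (is_Int_R_Int_R _ (ex_Int_R_mul_fpow u b Hb Hc Hcube)) as H2.
  pose proof (is_Int_R_Int_R _ (ex_Int_R_mul_fpow _ b Hb Hch Hcube_h)) as H3.
  set (r := fun x => u x * fpow f (b + d) x - u x * fpow f b x
                     - d * (u x * hlog f x * fpow f b x)).
  assert (Hr : is_Int_R r (Int_R (fun x => u x * fpow f (b + d) x)
                          - Int_R (fun x => u x * fpow f b x)
                          - d * Int_R (fun x => u x * hlog f x * fpow f b x)))
    by exact (is_RInt_gen_minus _ _ _ _ (is_RInt_gen_minus _ _ _ _ H1 H2)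
                                        (is_RInt_gen_scal _ d _ H3)).
  rewrite <- (Int_R_unique r _ Hr).
  replace (d ^ 2 * (K0 * D * PI)) with (d ^ 2 * K0 * D * PI) by ring.
  apply ex_Int_R_cauchy_bound.
  - intros x. pose proof (continuous_fpow b). pose proof (continuous_fpow (b + d)).
    pose proof continuous_hlog. unfold r. solve_continuous.
  - intros x.
    apply Rle_trans with (d ^ 2 * K0 * ((1 + Rabs (hlog f x)) ^ 3 * fpow f (b / 2) x)).
    + apply exp_mul_remainder_le; auto. apply hlog_le_mode.
    + rewrite (Rmult_assoc (d ^ 2 * K0)). apply Rmult_le_compat_l; [|apply HD].
      apply Rmult_le_pos; [apply pow2_ge_0 | left; apply exp_pos].
Qed.

Lemma is_derive_Int_R_mul_fpow (u : R -> R) b : 0 < b -> (forall x, continuous u x) ->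
  (forall x, Rabs (u x) <= 1 + Rabs (hlog f x)) ->
  is_derive (fun b => Int_R (fun x => u x * fpow f b x)) b
    (Int_R (fun x => u x * hlog f x * fpow f b x)).
Proof.
  intros Hb Hc Hu. destruct (Int_R_mul_fpow_remainder_le u b Hb Hc Hu) as [K HK].
  apply (is_derive_of_quadratic_remainder _ _ _ (b / 2) K); [lra | exact HK].
Qed.

Lemma Zb_pos b : 0 < b -> 0 < Zb f b.
Proof.
  intros Hb. destruct (fpow_tail b Hb) as [C HC].
  destruct (is_Int_R_nonneg (fpow f b) C) as [l [Hl [_ Hlow]]].
  - apply continuous_fpow.
  - intros x. split; [left; apply fpow_pos | apply HC].
  unfold Zb. rewrite (Int_R_unique _ _ Hl).
  apply Rlt_le_trans with (RInt (fpow f b) (-1) 1); [|apply Hlow; lra].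
  replace 0 with (RInt (fun _ => 0) (-1) 1)
    by (rewrite (RInt_const (V := R_CompleteNormedModule)); apply Rmult_0_r).
  apply RInt_lt; [lra | intros; apply continuous_fpow | intros; apply continuous_const |].
  intros; apply fpow_pos.
Qed.

Lemma is_derive_affine_mul_fpow b x :
  is_derive (fun x => (x - mu) * fpow f b x) x (fpow f b x + b * (kfun f mu x * fpow f b x)).
Proof.
  assert (Hlin : is_derive (fun x => x - mu) x 1) by (auto_derive; auto; ring).
  pose proof (is_derive_mult _ _ x _ _ Hlin (is_derive_fpow b x) Rmult_comm) as Hprod.
  replace (fpow f b x + b * (kfun f mu x * fpow f b x))
    with (1 * fpow f b x + (x - mu) * (b * Derive (hlog f) x * fpow f b x))
    by (unfold kfun; ring).
  exact Hprod.
Qed.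

Lemma is_Int_R_kfun_fpow b : 0 < b -> is_Int_R (fun x => kfun f mu x * fpow f b x) (- Zb f b / b).
Proof.
  intros Hb. set (v := fun x => (x - mu) * fpow f b x).
  assert (HDv : Derive v = fun x => fpow f b x + b * (kfun f mu x * fpow f b x)).
  { apply functional_extensionality. intros x. apply is_derive_unique, is_derive_affine_mul_fpow. }
  destruct (fpow_tail b Hb) as [C HC].
  assert (HC0 : 0 <= C).
  { specialize (HC 0). pose proof (fpow_pos f b 0). pose proof (cauchy_weight_pos 0). nra. }
  assert (Hv : forall t, Rabs (v t) <= C * (Rabs (t - mu) * cauchy_weight t)).
  { intros t. unfold v. rewrite Rabs_mult, (Rabs_pos_eq (fpow f b t)) by (left; apply fpow_pos).
    replace (C * (Rabs (t - mu) * cauchy_weight t)) with (Rabs (t - mu) * (C * cauchy_weight t))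
      by ring.
    apply Rmult_le_compat_l; [apply Rabs_pos | apply HC]. }
  assert (HI : is_Int_R (Derive v) (0 - 0)).
  { apply is_RInt_gen_Derive.
    - apply (filter_prod_infty _ 0 0). intros; eexists; apply is_derive_affine_mul_fpow.
    - apply (filter_prod_infty _ 0 0). intros. rewrite HDv.
      pose proof (continuous_fpow b). pose proof continuous_Derive_hlog.
      unfold kfun. solve_continuous.
    - apply (filterlim_affine_cauchy_bound v C mu); auto.
    - apply (filterlim_affine_cauchy_bound v C mu); auto. }
  rewrite HDv in HI.
  pose proof (is_RInt_gen_scal _ (/ b) _
                (is_RInt_gen_minus _ _ _ _ HI (is_Int_R_Int_R _ (ex_Int_R_fpow b Hb)))) as Hk.
  replace (- Zb f b / b) with (scal (/ b) (minus (0 - 0) (Int_R (fpow f b))))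
    by (unfold Zb; change (/ b * (0 - 0 - Int_R (fpow f b)) = - Int_R (fpow f b) / b); field; lra).
  eapply is_RInt_gen_ext; [|exact Hk].
  apply (filter_prod_infty _ 0 0). intros a a' _ _ x _.
  change (/ b * (fpow f b x + b * (kfun f mu x * fpow f b x) - fpow f b x)
          = kfun f mu x * fpow f b x).
  field. lra.
Qed.

Lemma Sfun_eq b : 0 < b -> Sfun f mu b = - / b.
Proof.
  intros Hb. unfold Sfun, Eb. rewrite (Int_R_unique _ _ (is_Int_R_kfun_fpow b Hb)).
  pose proof (Zb_pos b Hb). field. lra.
Qed.

Lemma is_derive_Sfun b : 0 < b -> is_derive (Sfun f mu) b (/ b ^ 2).
Proof.
  intros Hb. apply (is_derive_ext_loc (fun b => - / b)).
  - assert (Hb2 : 0 < b / 2) by lra. exists (mkposreal _ Hb2). intros y Hy.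
    change (Rabs (y - b) < b / 2) in Hy. apply Rabs_def2 in Hy.
    symmetry. apply Sfun_eq. lra.
  - auto_derive; [lra|]. field. lra.
Qed.

Lemma Varb_hlog_eq b : 0 < b ->
  Varb f b (hlog f) =
  (Int_R (fun x => hlog f x * hlog f x * fpow f b x) * Zb f b
   - Int_R (fun x => hlog f x * fpow f b x) ^ 2) / Zb f b ^ 2.
Proof.
  intros Hb. pose proof (Zb_pos b Hb).
  assert (Eh : ex_Int_R (fun x => hlog f x * fpow f b x)).
  { apply ex_Int_R_mul_fpow; auto using continuous_hlog.
    intros x. apply abs_le_one_add_abs_cube. lra. }
  assert (Ehh : ex_Int_R (fun x => hlog f x * hlog f x * fpow f b x)).
  { apply ex_Int_R_mul_fpow; auto.
    - intros x. pose proof continuous_hlog. solve_continuous.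
    - intros x. apply abs_mul_le_one_add_abs_cube. lra. }
  pose proof (ex_Int_R_fpow b Hb) as E1.
  unfold Varb, Eb at 1. set (m := Eb f b (hlog f)).
  rewrite (Int_R_ext _ (fun x => hlog f x * hlog f x * fpow f b x
                                  + (-2 * m * (hlog f x * fpow f b x) + m ^ 2 * fpow f b x)))
    by (intros; ring).
  rewrite Int_R_plus, Int_R_plus, Int_R_scal, Int_R_scal;
    auto using ex_Int_R_plus, ex_Int_R_scal.
  unfold m, Eb, Zb in *. field. lra.
Qed.

Lemma is_derive_Mfun b : 0 < b -> is_derive (Mfun f) b (Varb f b (hlog f)).
Proof.
  intros Hb. rewrite Varb_hlog_eq by exact Hb.
  pose proof (Zb_pos b Hb).
  assert (HA : is_derive (fun b => Int_R (fun x => hlog f x * fpow f b x)) b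
                 (Int_R (fun x => hlog f x * hlog f x * fpow f b x)))
    by (apply is_derive_Int_R_mul_fpow; auto using continuous_hlog; intros; lra).
  assert (HZ : is_derive (Zb f) b (Int_R (fun x => hlog f x * fpow f b x))).
  { apply (is_derive_ext (fun b => Int_R (fun x => 1 * fpow f b x))).
    { intros t. unfold Zb. apply Int_R_ext. intros; ring. }
    rewrite (Int_R_ext _ (fun x => 1 * hlog f x * fpow f b x)) by (intros; ring).
    apply is_derive_Int_R_mul_fpow; auto.
    - intros; apply continuous_const.
    - intros x. rewrite Rabs_R1. pose proof (Rabs_pos (hlog f x)). lra. }
  replace (Int_R (fun x => hlog f x * fpow f b x) ^ 2)
    with (Int_R (fun x => hlog f x * fpow f b x) * Int_R (fun x => hlog f x * fpow f b x)) by ring.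
  apply (is_derive_div _ _ b _ _ HA HZ). lra.
Qed.

End PowerFamily.

Theorem proposition3 (f : R -> R) (mu alpha Mb : R) :
  (forall x, 0 < f x) ->
  C4 f ->
  unimodal_at f mu ->
  0 < alpha -> regularly_varying (Hpot f) alpha ->
  0 < Mb -> (forall x, Rabs (Derive_n (hlog f) 4 x) < Mb) ->
  forall beta, 0 < beta ->
    ex_Int_R (fpow f beta) /\
    ex_Int_R (fun x => hlog f x * fpow f beta x) /\
    ex_Int_R (fun x => kfun f mu x * fpow f beta x) /\
    is_derive (Mfun f) beta (Varb f beta (hlog f)) /\
    Sfun f mu beta = - / beta /\
    is_derive (Sfun f mu) beta (/ beta ^ 2).
Proof.
  intros fpos [Hder _] Hu Ha Hrv _ _ beta Hb.
  assert (Hd1 : forall x, ex_derive f x) by (intros x; exact (Hder 1%nat x ltac:(lia))).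
  assert (Hd2 : forall x, ex_derive (Derive f) x) by (intros x; exact (Hder 2%nat x ltac:(lia))).
  pose proof (unimodal_le_mode f mu Hu) as Hmode.
  pose proof (fpow_le_cauchy_weight f mu alpha fpos Hu Ha Hrv) as Htail.
  split; [|split; [|split; [|split; [|split]]]].
  - apply (ex_Int_R_fpow f mu); auto.
  - apply (ex_Int_R_mul_fpow f mu); auto using continuous_hlog.
    intros x. apply abs_le_one_add_abs_cube. lra.
  - exists (- Zb f beta / beta). apply is_Int_R_kfun_fpow; auto.
  - apply (is_derive_Mfun f mu); auto.
  - apply Sfun_eq; auto.
  - apply is_derive_Sfun; auto.
Qed.
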